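(* Let $Q$ be a supported quantale and $R$ an equivariantly supported quantale. Then every strong homomorphism of based quantales $f=(f_1,f_0):Q\to R$ commutes with the supports, i.e. $f_0(\varsigma_Q(x))=\varsigma_R(f_1(x))$ for all $x\in Q$.
   Context: For a locale $A$, an $A$-$A$-bimodule is a sup-lattice $M$ with actions $a\triangleright m$, $m\triangleleft a$ preserving joins in each variable, with $1_A\triangleright m=m$, $(a\wedge b)\triangleright m=a\triangleright(b\triangleright m)$, $m\triangleleft1_A=m$, $m\triangleleft(a\wedge b)=(m\triangleleft a)\triangleleft b$, $(a\triangleright m)\triangleleft b=a\triangleright(m\triangleleft b)$. An $A$-$A$-quantale is such a $Q$ with associative join-preserving multiplication and $(a\triangleright x)y=a\triangleright(xy)$, $(x\triangleleft a)y=x(a\triangleright y)$, $(xy)\triangleleft a=x(y\triangleleft a)$; involutive if there is a join-preserving $x\mapsto x^*$ with $x^{**}=x$, $(xy)^*=y^*x^*$, $(a\triangleright(x\triangleleft b))^*=b\triangleright(x^*\triangleleft a)$. A based quantale is an involutive $Q_0$-$Q_0$-quantale for a locale $Q_0$. A support is a join-preserving $\varsigma:Q\to Q_0$ with $\varsigma(1_Q)=1_{Q_0}$, $\varsigma(x)\triangleright y\le xx^*y$, $\varsigma(x)\triangleright x=x$; equivariant if $\varsigma(a\triangleright x)=a\wedge\varsigma(x)$. A supported (resp. equivariantly supported) quantale is a based quantale with a support (resp. equivariant support). A homomorphism of based quantales $f:Q\to R$ is a pair $(f_1,f_0)$ with $f_1:Q\to R$ preserving joins, multiplication and involution, $f_0:Q_0\to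 R_0$ a frame homomorphism, and $f_1(a\triangleright x)=f_0(a)\triangleright f_1(x)$, $f_1(x\triangleleft a)=f_1(x)\triangleleft f_0(a)$; it is strong if $f_1(1_Q)=1_R$. *)

Set Implicit Arguments.
Unset Strict Implicit.

Definition image {A B : Type} (f : A -> B) (S : A -> Prop) : B -> Prop :=
  fun y => exists x, S x /\ y = f x.

Record SupLattice := {
  sl_car :> Type;
  sl_le : sl_car -> sl_car -> Prop;
  sl_le_refl : forall x, sl_le x x;
  sl_le_trans : forall x y z, sl_le x y -> sl_le y z -> sl_le x z;
  sl_le_antisym : forall x y, sl_le x y -> sl_le y x -> x = y;
  sl_sup : (sl_car -> Prop) -> sl_car;
  sl_sup_ub : forall (S : sl_car -> Prop) x, S x -> sl_le x (sl_sup S);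
  sl_sup_least : forall (S : sl_car -> Prop) y,
      (forall x, S x -> sl_le x y) -> sl_le (sl_sup S) y
}.

Arguments sl_le {s} _ _.
Arguments sl_sup {s} _.

Definition sl_top (L : SupLattice) : L := sl_sup (fun _ : L => True).

Definition join_preserving {L M : SupLattice} (f : L -> M) : Prop :=
  forall S : L -> Prop, f (sl_sup S) = sl_sup (image f S).

Record Locale := {
  loc_sl :> SupLattice;
  loc_meet : loc_sl -> loc_sl -> loc_sl;
  loc_meet_lb1 : forall a b, sl_le (loc_meet a b) a;
  loc_meet_lb2 : forall a b, sl_le (loc_meet a b) b;
  loc_meet_glb : forall a b c, sl_le c a -> sl_le c b -> sl_le c (loc_meet a b);
  loc_meet_sup : forall a (S : loc_sl -> Prop),
      loc_meet a (sl_sup S) = sl_sup (image (loc_meet a) S)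
}.

Arguments loc_meet {l} _ _.

Definition frame_hom {A B : Locale} (f : A -> B) : Prop :=
  join_preserving f /\
  (forall a b, f (loc_meet a b) = loc_meet (f a) (f b)) /\
  f (sl_top A) = sl_top B.

Record BasedQuantale := {
  bq_base : Locale;
  bq_sl :> SupLattice;
  bq_lact : bq_base -> bq_sl -> bq_sl;
  bq_ract : bq_sl -> bq_base -> bq_sl;
  bq_lact_sup_l : forall (S : bq_base -> Prop) m,
      bq_lact (sl_sup S) m = sl_sup (image (fun a => bq_lact a m) S);
  bq_lact_sup_r : forall a (S : bq_sl -> Prop),
      bq_lact a (sl_sup S) = sl_sup (image (bq_lact a) S);
  bq_ract_sup_l : forall (S : bq_sl -> Prop) a,
      bq_ract (sl_sup S) a = sl_sup (image (fun m => bq_ract m a) S);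
  bq_ract_sup_r : forall m (S : bq_base -> Prop),
      bq_ract m (sl_sup S) = sl_sup (image (bq_ract m) S);
  bq_lact_top : forall m, bq_lact (sl_top bq_base) m = m;
  bq_lact_meet : forall a b m, bq_lact (loc_meet a b) m = bq_lact a (bq_lact b m);
  bq_ract_top : forall m, bq_ract m (sl_top bq_base) = m;
  bq_ract_meet : forall m a b, bq_ract m (loc_meet a b) = bq_ract (bq_ract m a) b;
  bq_lact_ract : forall a m b, bq_ract (bq_lact a m) b = bq_lact a (bq_ract m b);
  bq_mul : bq_sl -> bq_sl -> bq_sl;
  bq_mul_assoc : forall x y z, bq_mul (bq_mul x y) z = bq_mul x (bq_mul y z);
  bq_mul_sup_l : forall (S : bq_sl -> Prop) y,
      bq_mul (sl_sup S) y = sl_sup (image (fun x => bq_mul x y) S);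
  bq_mul_sup_r : forall x (S : bq_sl -> Prop),
      bq_mul x (sl_sup S) = sl_sup (image (bq_mul x) S);
  bq_lact_mul : forall a x y, bq_mul (bq_lact a x) y = bq_lact a (bq_mul x y);
  bq_ract_mul : forall x a y, bq_mul (bq_ract x a) y = bq_mul x (bq_lact a y);
  bq_mul_ract : forall x y a, bq_ract (bq_mul x y) a = bq_mul x (bq_ract y a);
  bq_star : bq_sl -> bq_sl;
  bq_star_sup : join_preserving bq_star;
  bq_star_star : forall x, bq_star (bq_star x) = x;
  bq_star_mul : forall x y, bq_star (bq_mul x y) = bq_mul (bq_star y) (bq_star x);
  bq_star_act : forall a x b,
      bq_star (bq_lact a (bq_ract x b)) = bq_lact b (bq_ract (bq_star x) a)
}.

Arguments bq_lact {b0} _ _.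
Arguments bq_ract {b0} _ _.
Arguments bq_mul {b0} _ _.
Arguments bq_star {b0} _.

(** Supports.  Here 1_Q is the top element of Q. *)
Definition is_support (Q : BasedQuantale) (s : Q -> bq_base Q) : Prop :=
  join_preserving s /\
  s (sl_top Q) = sl_top (bq_base Q) /\
  (forall x y : Q, sl_le (bq_lact (s x) y) (bq_mul (bq_mul x (bq_star x)) y)) /\
  (forall x : Q, bq_lact (s x) x = x).

Definition is_equivariant_support (Q : BasedQuantale) (s : Q -> bq_base Q) : Prop :=
  is_support s /\ (forall (a : bq_base Q) (x : Q), s (bq_lact a x) = loc_meet a (s x)).

Definition bq_hom (Q R : BasedQuantale) (f1 : Q -> R) (f0 : bq_base Q -> bq_base R)
  : Prop :=
  join_preserving f1 /\
  (forall x y : Q, f1 (bq_mul x y) = bq_mul (f1 x) (f1 y)) /\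
  (forall x : Q, f1 (bq_star x) = bq_star (f1 x)) /\
  frame_hom f0 /\
  (forall (a : bq_base Q) (x : Q), f1 (bq_lact a x) = bq_lact (f0 a) (f1 x)) /\
  (forall (x : Q) (a : bq_base Q), f1 (bq_ract x a) = bq_ract (f1 x) (f0 a)).

Definition bq_strong (Q R : BasedQuantale) (f1 : Q -> R) : Prop :=
  f1 (sl_top Q) = sl_top R.


(* Equivariance of sR gives sR(a |> y) = a /\ sR(y).  Hence sR(f1 x) <= f0(sQ x),
   since f1 x = f1(sQ x |> x) = f0(sQ x) |> f1 x, and f0 a = sR(f0 a |> 1) for
   every a, where 1 = f1 1.  For a = sQ x the support axiom sQ x |> 1 <= x x* 1
   then bounds f0(sQ x) by sR(f1 x (f1 x)* 1) <= sR(f1 x). *)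

Lemma join_preserving_mono {L M : SupLattice} {f : L -> M} :
  join_preserving f -> forall a b : L, sl_le a b -> sl_le (f a) (f b).
Proof.
  intros Hf a b Hab.
  assert (Hb : b = sl_sup (fun t => t = a \/ t = b)).
  { apply sl_le_antisym.
    - apply sl_sup_ub. now right.
    - apply sl_sup_least. intros t [-> | ->]; auto using sl_le_refl. }
  rewrite Hb, Hf. apply sl_sup_ub. exists a. split; auto.
Qed.

Lemma loc_meet_top (A : Locale) (a : A) : loc_meet a (sl_top A) = a.
Proof.
  apply sl_le_antisym.
  - apply loc_meet_lb1.
  - apply loc_meet_glb; [apply sl_le_refl | apply sl_sup_ub; exact I].
Qed.

Section EquivariantSupport.

Context {R : BasedQuantale} {sR : R -> bq_base R}.
Hypothesis HsR : is_equivariant_support sR.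

Lemma eqsupport_lact_top (a : bq_base R) : sR (bq_lact a (sl_top R)) = a.
Proof.
  destruct HsR as [[_ [topR _]] equivR].
  now rewrite equivR, topR, loc_meet_top.
Qed.

Lemma eqsupport_le_of_lact_fixed (a : bq_base R) (y : R) :
  bq_lact a y = y -> sl_le (sR y) a.
Proof.
  destruct HsR as [_ equivR]. intros Hfix.
  rewrite <- Hfix, equivR. apply loc_meet_lb1.
Qed.

Lemma eqsupport_mul_le (y z : R) : sl_le (sR (bq_mul y z)) (sR y).
Proof.
  destruct HsR as [[_ [_ [_ fixR]]] _].
  apply eqsupport_le_of_lact_fixed.
  now rewrite <- bq_lact_mul, fixR.
Qed.

End EquivariantSupport.

Section HomSupport.

Context {Q R : BasedQuantale}.
Context {sQ : Q -> bq_base Q} {sR : R -> bq_base R}.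
Context {f1 : Q -> R} {f0 : bq_base Q -> bq_base R}.
Hypotheses (HsQ : is_support sQ) (HsR : is_equivariant_support sR).
Hypotheses (Hf : bq_hom f1 f0) (Hstrong : bq_strong f1).

Lemma eqsupport_hom_le (x : Q) : sl_le (sR (f1 x)) (f0 (sQ x)).
Proof.
  destruct HsQ as [_ [_ [_ fixQ]]].
  destruct Hf as [_ [_ [_ [_ [f1_lact _]]]]].
  apply (eqsupport_le_of_lact_fixed HsR).
  now rewrite <- f1_lact, fixQ.
Qed.

Lemma hom_support_le (x : Q) : sl_le (f0 (sQ x)) (sR (f1 x)).
Proof.
  destruct HsQ as [_ [_ [lactQ _]]].
  pose proof HsR as [[joinR _] _].
  destruct Hf as [join1 [f1_mul [_ [_ [f1_lact _]]]]].
  rewrite <- (eqsupport_lact_top HsR (f0 (sQ x))), <- Hstrong, <- f1_lact.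
  apply sl_le_trans with (sR (f1 (bq_mul (bq_mul x (bq_star x)) (sl_top Q)))).
  - apply (join_preserving_mono joinR), (join_preserving_mono join1), lactQ.
  - rewrite !f1_mul, bq_mul_assoc. apply (eqsupport_mul_le HsR).
Qed.

End HomSupport.

Theorem lemma3p25
  (Q R : BasedQuantale)
  (sQ : Q -> bq_base Q) (HsQ : is_support sQ)
  (sR : R -> bq_base R) (HsR : is_equivariant_support sR)
  (f1 : Q -> R) (f0 : bq_base Q -> bq_base R)
  (Hf : bq_hom f1 f0) (Hstrong : bq_strong f1) :
  forall x : Q, f0 (sQ x) = sR (f1 x).
Proof.
  intro x. apply sl_le_antisym.
  - exact (hom_support_le HsQ HsR Hf Hstrong x).
  - exact (eqsupport_hom_le HsQ HsR Hf x).
Qed.
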